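(* Fix $s\in\mathbb{N}^+$. If $m$ is sufficiently large (depending on $s$), then for every graph $G$ and all positive integers $r_1,\dots,r_s$ the following holds for the tournament $T_G^\bigstar$: for every $i\in[s]$ there is a constant $a_i>0$ such that for all $x,y\in V(T_G^\bigstar)$, $$t_{x,y}(F_i^{\dagger\bullet\bullet},T_G^\bigstar)=\begin{cases}a_i,& \text{if } (x,y) \text{ or } (y,x) \text{ is an arc of } T_{i*k}[G] \text{ for some } k\in[r_i],\\ 0,&\text{otherwise.}\end{cases}$$ Equivalently, after deleting all-zero rows and columns, the matrix $\big(t_{x,y}(F_i^{\dagger\bullet\bullet},T_G^\bigstar)\big)_{x,y}$ equals $a_i$ times the adjacency matrix of $r_i$ disjoint copies of $G$.
   Context: All digraphs are finite and loopless; a tournament is a digraph in which every pair of distinct vertices is joined by exactly one arc. A homomorphism from a digraph $F$ to a digraph $H$ is a map $\varphi:V(F)\to V(H)$ with $(\varphi(u),\varphi(v))\in E(H)$ whenever $(u,v)\in E(F)$. For a digraph $F$ with two distinguished roots $z,w$ and vertices $x,y$ of $T$, $\hom_{x,y}(F,T)$ is the number of homomorphisms $\varphi:F\to T$ with $\varphi(z)=x,\varphi(w)=y$, and $t_{x,y}(F,T)=\hom_{x,y}(F,T)/|V(T)|^{|V(F)|-2}$. Construction of $F_i^{\bullet\bullet}$: fix $s$, a positive integer $m$, and a tournament $F_0$ on vertex set $[m]$ satisfying: (I) every vertex has out-degree and in-degree at most $2m/3$; (II) there are no disjoint $A_1,A_2\subseteq[m]$ with $|A_1|=|A_2|=\lceil\sqrt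 m\,\rceil$ such that $(a_1,a_2)$ is an arc for all $a_1\in A_1,a_2\in A_2$; (III) for every $S\subseteq[m]$ with $|S|\ge 2m/13-\sqrt m$, $F_0[S]$ contains a directed cycle. Let $k_1,\dots,k_s$ be integers in $(2m/3+2,\,5m/6)$ with $k_i>k_{i+1}+1$. $F_i^{\bullet\bullet}$ is the digraph on $[m]\cup\{z_i,w_i\}$ (roots $z_i,w_i$) whose arcs are the arcs of $F_0$, plus $z_i\to v$, $v\to w_i$ for $1\le v\le k_i$, plus $u\to z_i$, $w_i\to u$ for $k_i<u\le m$. The symmetrization $F_i^{\dagger\bullet\bullet}$ is obtained from two disjoint copies of $F_i^{\bullet\bullet}$, the ''left'' copy with roots $z^1,w^1$ and the ''right'' copy with roots $z^2,w^2$, by identifying $z^1$ with $w^2$ (root $z_i$) and $w^1$ with $z^2$ (root $w_i$). Construction of $T_G^\bigstar$: let $G$ be a graph on $[n]$ and $r_1,\dots,r_s\in\mathbb{N}^+$. For $i\in[s]$ the tournament $T_i$ is built as follows. (1) $T_0$ is the transitive tournament on $[n]$ with arcs $a\to b$ for $a<b$; $T_0[G]$ is its sub-digraph with arcs $(a,b)$, $a<b$, $ab\in E(G)$. Order the arcs of $T_0[G]$ by $(x,y)\succ(a,b)$ iff $x+y>a+b$, or $x+y=a+b$ and $x>a$. (2) For each arc $e=(a,b)$ of $T_0[G]$ attach a new copy of $F_i^{\dagger\bullet\bullet}$ with root $z_i$ identified with $a$ and root $w_i$ with $b$ (so in the left copy $\overleftarrow{F_i^e}$ the roots $z,w$ are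 $a,b$, and in the right copy $\overrightarrow{F_i^e}$ they are $b,a$). Let $V_e$ be the $2m$ non-root vertices of this copy and $V_0=\bigcup_e V_e$. (3) Add all arcs $x\to y$ with $x$ a non-root vertex of $\overleftarrow{F_i^e}$ and $y$ a non-root vertex of $\overrightarrow{F_i^e}$. (4) For each arc $e=(a,b)$ of $T_0[G]$ and each $x\in[n]\setminus\{a,b\}$, add arcs $x\to v$ for all $v\in V_e$. (5) For arcs $e_1\succ e_2$ of $T_0[G]$, add all arcs $x\to y$ with $x\in V_{e_1}$, $y\in V_{e_2}$. Then $T_G^\bigstar$ is the tournament formed by disjoint copies $T_{i*k}$ of $T_i$ for $i\in[s]$, $k\in[r_i]$, with all arcs $u\to v$ for $u\in V(T_{i_1*k_1})$, $v\in V(T_{i_2*k_2})$ whenever $i_1<i_2$, or $i_1=i_2$ and $k_1<k_2$. $T_{i*k}[G]$ denotes the copy of $T_0[G]$ in $T_{i*k}$. *)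

From mathcomp Require Import all_boot all_order all_algebra.
Set Implicit Arguments. Unset Strict Implicit. Unset Printing Implicit Defensive.
Import Order.TTheory GRing.Theory Num.Theory.

Definition hom_xy (FV TV : finType) (EF : rel FV) (ET : rel TV)
    (z w : FV) (x y : TV) : nat :=
  #|[set phi : {ffun FV -> TV} |
       [&& phi z == x, phi w == y &
           [forall u, forall v, EF u v ==> ET (phi u) (phi v)]]]|.

Definition t_xy (FV TV : finType) (EF : rel FV) (ET : rel TV)
    (z w : FV) (x y : TV) : rat :=
  ((hom_xy EF ET z w x y)%:R / (#|TV| ^ (#|FV| - 2))%:R)%R.

(* The tournament F_0 on [m] (vertex v of [m] is represented by the   *)
(* ordinal v-1 : 'I_m) and its conditions (I)-(III).                   *)

Definition is_tournament (T : finType) (E : rel T) : Prop :=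
  (forall x, ~~ E x x) /\
  (forall x y, x != y -> (E x y && ~~ E y x) || (E y x && ~~ E x y)).

Definition ceil_sqrt (m : nat) : nat :=
  let q := Nat.sqrt m in if q * q == m then q else q.+1.

Definition condI (m : nat) (F0 : rel 'I_m) : Prop :=
  forall v : 'I_m, 3 * #|[set u | F0 v u]| <= 2 * m /\
                   3 * #|[set u | F0 u v]| <= 2 * m.

Definition condII (m : nat) (F0 : rel 'I_m) : Prop :=
  ~ exists A1 A2 : {set 'I_m},
      [/\ [disjoint A1 & A2], #|A1| = ceil_sqrt m, #|A2| = ceil_sqrt m &
          forall a1 a2, a1 \in A1 -> a2 \in A2 -> F0 a1 a2].

Definition has_dicycle_in (m : nat) (F0 : rel 'I_m) (S : {set 'I_m}) : Prop :=
  exists c : seq 'I_m,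
    [/\ 0 < size c, uniq c, {subset c <= S} & cycle F0 c].

(* For naturals, |S| >= 2m/13 - sqrt m  <->  (2m - 13|S|)^2 <= 169 m
   (with truncated subtraction; both sides hold when 2m <= 13|S|). *)
Definition condIII (m : nat) (F0 : rel 'I_m) : Prop :=
  forall S : {set 'I_m}, (2 * m - 13 * #|S|) ^ 2 <= 169 * m ->
    has_dicycle_in F0 S.

Definition F0_good (m : nat) (F0 : rel 'I_m) : Prop :=
  [/\ 0 < m, is_tournament F0, condI F0, condII F0 & condIII F0].

(* k_1 > ... > k_s (with gaps), each in (2m/3 + 2, 5m/6); index i in [s]
   is represented by the ordinal i-1 : 'I_s. *)
Definition k_good (m s : nat) (k : 'I_s -> nat) : Prop :=
  (forall i, 2 * m + 6 < 3 * k i /\ 6 * k i < 5 * m) /\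
  (forall i j : 'I_s, (j : nat) = i.+1 -> k j + 1 < k i).

(* F_i^{dagger bullet bullet}.  Vertices:                               *)
(*   inl (false, v) : vertex v of the left copy of F_i^{..}             *)
(*   inl (true,  v) : vertex v of the right copy                        *)
(*   inr false      : root z_i  (= z^1 = w^2)                           *)
(*   inr true       : root w_i  (= w^1 = z^2)                           *)
(* So the z-root of copy c is inr c and its w-root is inr (~~ c).       *)
(* Non-root vertex v (ordinal) corresponds to v+1 in [m], hence         *)
(* "1 <= v+1 <= k" is "v < k".                                          *)

Definition FdagV (m : nat) : finType := ((bool * 'I_m) + bool)%type.

Definition Fdag_arc (m : nat) (F0 : rel 'I_m) (k : nat) : rel (FdagV m) :=
  fun x y =>
  match x, y with
  | inl (c, u), inl (c', v) => (c == c') && F0 u v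
  | inr r, inl (c, v) =>
      if r == c then (v < k)%N
      else (k <= v)%N
  | inl (c, v), inr r =>
      if r == c then (k <= v)%N
      else (v < k)%N
  | inr _, inr _ => false
  end.

Definition root_z (m : nat) : FdagV m := inr false.
Definition root_w (m : nat) : FdagV m := inr true.

(* The tournament T_i built from a graph G on [n] (vertex a of [n] is  *)
(* the ordinal a-1 : 'I_n).                                            *)

Definition simple_graph (n : nat) (G : rel 'I_n) : Prop :=
  (forall a, ~~ G a a) /\ (forall a b, G a b = G b a).

Definition Garc (n : nat) (G : rel 'I_n) (p : 'I_n * 'I_n) : bool :=
  (p.1 < p.2)%N && G p.1 p.2.

Definition GedgeT (n : nat) (G : rel 'I_n) : finType :=
  {p : 'I_n * 'I_n | Garc G p}.

(* Vertices of T_i: inl a for a in [n]; inr (e, c, v) the non-root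
   vertex inl (c, v) of the copy of F_i^{dagger..} attached to arc e. *)
Definition TV (n : nat) (G : rel 'I_n) (m : nat) : finType :=
  ('I_n + (GedgeT G * bool * 'I_m))%type.

Definition embed (n : nat) (G : rel 'I_n) (m : nat) (e : GedgeT G)
    (u : FdagV m) : TV G m :=
  match u with
  | inl (c, v) => inr (e, c, v)
  | inr false => inl (sval e).1
  | inr true => inl (sval e).2
  end.

Definition arc_succ (n : nat) (G : rel 'I_n) (e1 e2 : GedgeT G) : bool :=
  let: (x, y) := sval e1 in let: (a, b) := sval e2 in
  (a + b < x + y)%N || ((x + y == a + b) && (a < x)%N).

Definition Ti_arc (n : nat) (G : rel 'I_n) (m : nat) (F0 : rel 'I_m)
    (k : nat) : rel (TV G m) :=
  fun x y =>
  [||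
      match x, y with inl a, inl b => (a < b)%N | _, _ => false end,
      [exists e : GedgeT G, exists u : FdagV m, exists v : FdagV m,
         [&& embed e u == x, embed e v == y & Fdag_arc F0 k u v]],
      match x, y with
      | inr (e1, c1, _), inr (e2, c2, _) => [&& e1 == e2, ~~ c1 & c2]
      | _, _ => false end,
      match x, y with
      | inl a, inr (e, _, _) => (a != (sval e).1) && (a != (sval e).2)
      | _, _ => false end
    |
      match x, y with
      | inr (e1, _, _), inr (e2, _, _) => arc_succ e1 e2
      | _, _ => false end ].

Definition CopyT (s : nat) (r : 'I_s -> nat) : finType :=
  {i : 'I_s & 'I_(r i)}.

Definition copy_lt (s : nat) (r : 'I_s -> nat) (c1 c2 : CopyT r) : bool :=
  (tag c1 < tag c2)%N ||
  ((tag c1 == tag c2) && (val (tagged c1) < val (tagged c2))%N).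

Definition TstarV (s : nat) (r : 'I_s -> nat) (n : nat) (G : rel 'I_n)
    (m : nat) : finType := (CopyT r * TV G m)%type.

Definition Tstar_arc (s : nat) (r : 'I_s -> nat) (n : nat) (G : rel 'I_n)
    (m : nat) (F0 : rel 'I_m) (k : 'I_s -> nat) : rel (TstarV r G m) :=
  fun x y =>
  if x.1 == y.1 then @Ti_arc n G m F0 (k (tag x.1)) x.2 y.2
  else copy_lt x.1 y.1.

Definition in_TikG (s : nat) (r : 'I_s -> nat) (n : nat) (G : rel 'I_n)
    (m : nat) (i : 'I_s) (x y : TstarV r G m) : bool :=
  (x.1 == y.1) && (tag x.1 == i) &&
  match x.2, y.2 with
  | inl a, inl b => Garc G (a, b)
  | _, _ => false
  end.

From mathcomp Require Import all_boot all_order all_algebra zify.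
From Stdlib Require PeanoNat.
Set Implicit Arguments. Unset Strict Implicit. Unset Printing Implicit Defensive.

(* A homomorphism of F_i^† into T_G^★ rooted at (x, y) is rigid.  Every vertex of F_i^†
   lies on a path from one root to the other, in one direction or the other, so the image
   lies in a single copy T_{j*l}.  There T_0 is transitive, so by (III) few vertices of
   F_0 go to [n], and the halves of the blocks V_e are linearly ordered, so by (II) almost
   all vertices of each copy of F_0 go to one half-block; as F_0 has minimum degree about
   m/3, all of them and both roots go there.  Counting the vertices below and above the
   threshold k_i then sends the roots to the ends of an arc of T_0[G] and forces k_j = k_i,
   i.e. j = i.  Hence the homomorphisms rooted at an arc of T_{i*l}[G] are the self-maps
   of the attached copy, whose number does not depend on the arc, and there are none
   rooted anywhere else. *)

Lemma card_ord_lt (m k : nat) : k <= m -> #|[set v : 'I_m | v < k]| = k.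
Proof.
move=> hk; have -> : [set v : 'I_m | v < k] = widen_ord hk @: [set: 'I_k].
  apply/setP=> v; rewrite inE; apply/idP/imsetP => [hv|[j _ ->] /=]; last exact: ltn_ord.
  by exists (Ordinal hv) => //; apply: val_inj.
rewrite card_imset ?cardsT ?card_ord // => i j /(congr1 val) /= ij.
exact: val_inj.
Qed.

Lemma card_ord_ge (m k : nat) : k <= m -> #|[set v : 'I_m | k <= v]| = m - k.
Proof.
move=> hk; have := cardsC [set v : 'I_m | v < k]; rewrite card_ord card_ord_lt //.
have -> : ~: [set v : 'I_m | v < k] = [set v : 'I_m | k <= v].
  by apply/setP=> v; rewrite !inE -leqNgt.
lia.
Qed.

Lemma subset_of_card (T : finType) (A : {set T}) (s : nat) :
  s <= #|A| -> exists2 B : {set T}, B \subset A & #|B| = s.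
Proof.
case/card_geqP=> l [ul <- lA]; exists [set x in l]; last by rewrite cardsE; apply/card_uniqP.
by apply/subsetP=> x; rewrite inE => /lA.
Qed.

Lemma leq_card_in_maps (T1 T2 : finType) (D : {set T1}) (E : {set T2}) (f : T1 -> T2) :
  {in D &, injective f} -> {in D, forall x, f x \in E} -> #|D| <= #|E|.
Proof.
move=> finj fDE; rewrite -(card_in_imset finj); apply: subset_leq_card.
by apply/subsetP=> _ /imsetP[x xD ->]; exact: fDE.
Qed.

Lemma meet_of_card_setC_lt (T : finType) (A B : {set T}) :
  #|~: B| < #|A| -> exists2 x, x \in A & x \in B.
Proof.
move=> hAB; case: (boolP (A \subset ~: B)) => [/subset_leq_card|/subsetPn[x xA]].
  by rewrite leqNgt hAB.
by rewrite inE negbK; exists x.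
Qed.

Lemma cycle_potential_increasing (T : eqType) (e : rel T) (f : T -> nat) (P : pred T)
    (c : seq T) :
  {in P &, forall u v, e u v -> f u < f v} -> all P c -> 0 < size c -> ~~ cycle e c.
Proof.
move=> he; case: c => // x c cP _; apply/negP => cyc.
have : cycle (relpre f ltn) (x :: c) by apply: (sub_in_cycle _ cP cyc).
move/(order_path_min (fun _ _ _ => @ltn_trans _ _ _))/allP/(_ x).
by rewrite mem_rcons mem_head ltnn => /(_ isT).
Qed.

Lemma ceil_sqrt_bounds (m : nat) :
  0 < m -> 0 < ceil_sqrt m /\ ceil_sqrt m <= Nat.sqrt m + 1.
Proof.
rewrite /ceil_sqrt; case: eqP => [|_]; last by lia.
by case: (Nat.sqrt m) => [|q] /= <-; lia.
Qed.

(* That is, 6 (P + 2 (ceil(sqrt m) - 1)) < m: a set to which (III) does not apply and two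
   sets smaller than ceil(sqrt m) cover less than m/6 vertices. *)
Lemma condIII_failure_small (m P : nat) :
  80 * 80 <= m -> ~~ ((2 * m - 13 * P) ^ 2 <= 169 * m) ->
  6 * (P + 2 * ceil_sqrt m) < m + 12.
Proof.
move=> hm; rewrite -ltnNge expnS expn1 => hP.
have [hq1 hq2] := PeanoNat.Nat.sqrt_spec' m.
have [_ hs] := ceil_sqrt_bounds (leq_trans (isT : 0 < 80 * 80) hm).
move: (Nat.sqrt m) hq1 hq2 hs => q hq1 hq2 hs.
have h13 : 13 * q < 2 * m - 13 * P.
  rewrite ltnNge; apply/negP => h; have := leq_mul h h; lia.
have : 78 * q <= m by case: (ltnP q 78) => h; [lia | have := leq_mul h (leqnn q); lia].
lia.
Qed.

Section Tournament.

Variables (m : nat) (F0 : rel 'I_m).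
Hypothesis tourF0 : is_tournament F0.

Lemma tournament_irr u : ~~ F0 u u.
Proof. by case: tourF0. Qed.

Lemma tournament_total u v : u != v -> F0 u v || F0 v u.
Proof. by case: tourF0 => _ /(_ u v) h /h /orP[/andP[-> _]|/andP[-> _]]; rewrite ?orbT. Qed.

Lemma tournament_degree_lb (hI : condI F0) u :
  m <= 3 * #|[set v | F0 u v]| + 3 /\ m <= 3 * #|[set v | F0 v u]| + 3.
Proof.
have [h1 h2] := hI u.
have : ~: [set u] \subset [set v | F0 u v] :|: [set v | F0 v u].
  by apply/subsetP=> v; rewrite !inE => vu; apply: tournament_total; rewrite eq_sym.
move/subset_leq_card; rewrite cardsU cardsC1 card_ord; lia.
Qed.

Lemma tournament_neighbours_in (hI : condI F0) (B : {set 'I_m}) u :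
  3 < m -> 6 * #|~: B| < m ->
  (exists2 v, F0 u v & v \in B) /\ (exists2 v, F0 v u & v \in B).
Proof.
move=> m_gt3 B_large; have [dout din] := tournament_degree_lb hI u.
(* The cardinals are generalised so that [lia] sees each of them as a single atom. *)
split.
  have [|v] := @meet_of_card_setC_lt _ [set v | F0 u v] B; last by rewrite inE; exists v.
  by move: dout B_large; move: #|[set v | F0 u v]| #|~: B| => d x; lia.
have [|v] := @meet_of_card_setC_lt _ [set v | F0 v u] B; last by rewrite inE; exists v.
by move: din B_large; move: #|[set v | F0 v u]| #|~: B| => d x; lia.
Qed.

Lemma condII_level (hII : condII F0) (R : {set 'I_m}) (f : 'I_m -> nat) :
  0 < ceil_sqrt m -> {in R &, forall u v, F0 u v -> f u <= f v} ->
  exists t, #|[set v in R | f v < t]| < ceil_sqrt m /\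
            #|[set v in R | t < f v]| < ceil_sqrt m.
Proof.
set s0 := ceil_sqrt m => s0_gt0 fmono.
have [Rsmall|Rbig] := ltnP #|R| s0.
  by exists 0; split; apply: leq_ltn_trans Rsmall; apply/subset_leq_card/subsetP => v;
     rewrite inE => /andP[].
have hex : exists t, s0 <= #|[set v in R | f v < t.+1]|.
  exists (\max_(v in R) f v); apply: (leq_trans Rbig); apply/subset_leq_card/subsetP => v vR.
  by rewrite inE vR ltnS (leq_bigmax_cond _ vR).
case: (ex_minnP hex) => t lowt tmin; exists t; split.
  case: t lowt tmin => [|t] _ tmin.
    by rewrite (_ : [set v in R | f v < 0] = set0) ?cards0 //; apply/setP => v;
       rewrite !inE ltn0 andbF.
  by rewrite ltnNge; apply/negP => /tmin; rewrite ltnn.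
rewrite ltnNge; apply/negP => hight.
have [A1 sA1 cA1] := subset_of_card lowt; have [A2 sA2 cA2] := subset_of_card hight.
have inA1 a : a \in A1 -> (a \in R) && (f a <= t).
  by move/(subsetP sA1); rewrite inE ltnS.
have inA2 a : a \in A2 -> (a \in R) && (t < f a) by move/(subsetP sA2); rewrite inE.
apply: hII; exists A1, A2; split => //.
  rewrite disjoints_subset; apply/subsetP => a /inA1 /andP[_ ha]; rewrite inE.
  by apply/negP => /inA2 /andP[_]; rewrite ltnNge ha.
move=> a1 a2 /inA1 /andP[R1 h1] /inA2 /andP[R2 h2].
have /tournament_total : a1 != a2 by apply/eqP => e; subst a2; lia.
case/orP => // /(fmono _ _ R2 R1); lia.
Qed.

End Tournament.

(* F_i^† together with the arcs that T_i adds inside one attached copy: left copy to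
   right copy (step 3) and z_i -> w_i (the arc a -> b of T_0).  It is a tournament. *)
Definition Fdag_tour_arc (m : nat) (F0 : rel 'I_m) (K : nat) : rel (FdagV m) :=
  fun u v => Fdag_arc F0 K u v ||
    match u, v with
    | inl (false, _), inl (true, _) => true
    | inr false, inr true => true
    | _, _ => false end.

Section FdagArcs.

Variables (m : nat) (F0 : rel 'I_m) (K : nat).

Lemma Fdag_arc_root_nonroot (c : bool) (v : 'I_m) :
  [/\ Fdag_arc F0 K (inr c) (inl (c, v)) = (v < K),
      Fdag_arc F0 K (inl (c, v)) (inr (~~ c)) = (v < K),
      Fdag_arc F0 K (inr (~~ c)) (inl (c, v)) = (K <= v) &
      Fdag_arc F0 K (inl (c, v)) (inr c) = (K <= v)].
Proof. by case: c. Qed.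

Local Notation E := (Fdag_tour_arc F0 K).

Lemma Fdag_tour_arc_rl r c w : E (inr r) (inl (c, w)) = if r == c then w < K else K <= w.
Proof. by rewrite /Fdag_tour_arc /=; case: c; case: r; rewrite ?orbF. Qed.

Lemma Fdag_tour_arc_lr r c w : E (inl (c, w)) (inr r) = if r == c then K <= w else w < K.
Proof. by rewrite /Fdag_tour_arc /=; case: c; case: r; rewrite ?orbF. Qed.

Lemma Fdag_tour_arc_rr r r' : E (inr r) (inr r') = ~~ r && r'.
Proof. by case: r; case: r'. Qed.

Lemma Fdag_tour_arc_ll c w c' w' :
  E (inl (c, w)) (inl (c', w')) = (c == c') && F0 w w' || ~~ c && c'.
Proof. by rewrite /Fdag_tour_arc /=; case: c; case: c'. Qed.

End FdagArcs.

Section AttachedCopies.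

Variables (n : nat) (G : rel 'I_n) (m : nat).

Lemma edge_lt (e : GedgeT G) : (sval e).1 < (sval e).2.
Proof. by case: e => -[a b] /= /andP[]. Qed.

Lemma embed_inj (e : GedgeT G) : injective (@embed n G m e).
Proof.
have := edge_lt e; move=> ab [[c u]|[]] [[c' v]|[]] //= => [[-> ->] //| [ba] | [ba]] //;
by move: ab; rewrite ba ltnn.
Qed.

Lemma embed_nonroot_inj (e e' : GedgeT G) (u : FdagV m) c w :
  embed e' (inl (c, w)) = embed e u -> e' = e /\ inl (c, w) = u.
Proof. by case: u => [[c' w']|[]] //= [-> -> ->]. Qed.

Definition decode (e : GedgeT G) (t : TV G m) : FdagV m :=
  match t with
  | inl a => inr (a != (sval e).1)
  | inr (_, c, w) => inl (c, w)
  end.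

Lemma embedK (e : GedgeT G) : cancel (@embed n G m e) (decode e).
Proof.
by case=> [[c w]|[]] //=; rewrite ?eqxx // neq_ltn edge_lt orbT.
Qed.

Lemma embed_roots_inj (e1 e2 : GedgeT G) (r1 r2 : bool) :
  @embed n G m e1 (inr r1) = embed e2 (inr r2) ->
  @embed n G m e1 (inr (~~ r1)) = embed e2 (inr (~~ r2)) -> e1 = e2 /\ r1 = r2.
Proof.
have := edge_lt e1; have := edge_lt e2.
case: e1 e2 => -[a1 b1] p1 [[a2 b2] p2] /= h2 h1.
case: r1; case: r2 => /= -[e1] [e2]; subst; try by exfalso; lia.
all: by split => //; have -> : p2 = p1 by exact: bool_irrelevance.
Qed.

Lemma arc_succ_irr (e : GedgeT G) : arc_succ e e = false.
Proof. by case: e => -[a b] p; rewrite /arc_succ /= ltnn eqxx ltnn. Qed.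

Section TiArcs.

Variables (F0 : rel 'I_m) (K : nat).
Local Notation T := (@Ti_arc n G m F0 K).

Lemma attached_arc_witness x y :
  [exists e : GedgeT G, exists u : FdagV m, exists v : FdagV m,
     [&& embed e u == x, embed e v == y & Fdag_arc F0 K u v]] ->
  exists e u v, [/\ embed e u = x, embed e v = y & Fdag_arc F0 K u v].
Proof.
by case/existsP=> e /existsP[u /existsP[v /and3P[/eqP <- /eqP <- uv]]]; exists e, u, v.
Qed.

Lemma attached_arc_embed (e : GedgeT G) (u v : FdagV m) :
  [exists e' : GedgeT G, exists u' : FdagV m, exists v' : FdagV m,
     [&& embed e' u' == embed e u, embed e' v' == embed e v & Fdag_arc F0 K u' v']]
  = Fdag_arc F0 K u v.
Proof.
apply/idP/idP => [|uv]; last first.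
  by apply/existsP; exists e; apply/existsP; exists u; apply/existsP; exists v; rewrite !eqxx.
case/attached_arc_witness=> e' [[[c w]|r] [v' [eu ev uv]]].
  by case: (embed_nonroot_inj eu) => ee <-; subst e'; rewrite -(embed_inj ev).
case: v' ev uv => [[c w]|//] ev uv.
by case: (embed_nonroot_inj ev) => ee <-; subst e'; rewrite -(embed_inj eu).
Qed.

Lemma Ti_arc_irr : (forall u, ~~ F0 u u) -> forall x, ~~ T x x.
Proof.
move=> F0irr x; apply/negP; case/or4P.
- by case: x => // a; rewrite ltnn.
- case/attached_arc_witness=> e [u [v [<- /embed_inj <-]]].
  by case: v => [[c v]|//]; rewrite /= eqxx (negbTE (F0irr v)).
- by case: x => // -[[e []] v]; rewrite ?andbF.
- by case/orP; case: x => // -[[e c] v]; rewrite arc_succ_irr.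
Qed.

Lemma Ti_arc_embed (e : GedgeT G) (u v : FdagV m) :
  T (embed e u) (embed e v) = Fdag_tour_arc F0 K u v.
Proof.
rewrite /Ti_arc attached_arc_embed /Fdag_tour_arc.
have ab := edge_lt e.
case: u => [[[] w]|[]]; case: v => [[[] w']|[]];
  rewrite /= ?arc_succ_irr ?eqxx ?andbF ?andbT ?ltnn /= ?orbF ?orbT //.
by rewrite ltnNge (ltnW ab).
Qed.

Lemma Ti_arc_inl a b : T (inl a) (inl b) -> a < b.
Proof.
rewrite /Ti_arc /= orbF => /orP[//|/attached_arc_witness[e [u [v [eu ev uv]]]]].
by case: u eu uv => [[c w]|r] //= _; case: v ev => [[c' w']|r'].
Qed.

Lemma Ti_arc_to_inl e c v a :
  T (inr (e, c, v)) (inl a) -> exists r, inl a = @embed n G m e (inr r).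
Proof.
rewrite /Ti_arc /= orbF => /attached_arc_witness[e' [u [w [eu ew _]]]].
case: u eu => [[c' w']|[]] // [? ? ?]; subst.
by case: w ew => [[c' w']|r] //= ew; exists r; rewrite -ew.
Qed.

End TiArcs.

(* [arc_weight] realises the order ≻ on the arcs of T_0[G] by an injection into nat, and
   [block_rank] ranks the 2|E(G)| halves of the blocks V_e so that every arc of T_i between
   two different halves goes up in rank (Ti_arc_rank). *)
Definition arc_weight (e : GedgeT G) : nat := ((sval e).1 + (sval e).2) * n + (sval e).1.

Definition block_rank (e : GedgeT G) (c : bool) : nat := 2 * (3 * n * n - arc_weight e) + c.

Definition vertex_rank (t : TV G m) : nat :=
  if t is inr (e, c, _) then block_rank e c else 0.

Lemma arc_weight_lt (e : GedgeT G) : arc_weight e < 3 * n * n.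
Proof.
rewrite /arc_weight; case: e => -[a b] /= _.
have := ltn_ord a; have := ltn_ord b; nia.
Qed.

Lemma arc_weight_inj : injective arc_weight.
Proof.
rewrite /arc_weight => -[[a1 b1] p1] [[a2 b2] p2] /= h.
have n_gt0 : 0 < n by apply: leq_ltn_trans (ltn_ord a1).
have sab : a1 + b1 = a2 + b2.
  have := congr1 (divn^~ n) h; rewrite /= !divnMDl //.
  by rewrite !divn_small ?ltn_ord // !addn0.
have ea : a1 = a2.
  by apply: val_inj; have := congr1 (modn^~ n) h; rewrite /= !modnMDl !modn_small.
have eb : b1 = b2 by apply: val_inj => /=; rewrite ea in sab; lia.
by subst; rewrite (bool_irrelevance p2 p1).
Qed.

Lemma arc_succ_weight (e1 e2 : GedgeT G) : arc_succ e1 e2 -> arc_weight e2 < arc_weight e1.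
Proof.
rewrite /arc_weight /arc_succ; case: e1 => -[x y] p1; case: e2 => -[a b] p2 /=.
have := ltn_ord x; have := ltn_ord a.
by move=> ? ? /orP[|/andP[/eqP -> ?]]; nia.
Qed.

Lemma block_rank_inj (e1 e2 : GedgeT G) c1 c2 :
  block_rank e1 c1 = block_rank e2 c2 -> e1 = e2 /\ c1 = c2.
Proof.
rewrite /block_rank => h; have := arc_weight_lt e1; have := arc_weight_lt e2.
have <- : c1 = c2 by move: h; case: c1; case: c2 => //= h; lia.
by split => //; apply: arc_weight_inj; lia.
Qed.

Section TiBlocks.

Variables (F0 : rel 'I_m) (K : nat).
Local Notation T := (@Ti_arc n G m F0 K).

Lemma Ti_arc_rank e1 c1 v1 e2 c2 v2 :
  T (inr (e1, c1, v1)) (inr (e2, c2, v2)) ->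
  (e1 = e2 /\ c1 = c2) \/ block_rank e1 c1 < block_rank e2 c2.
Proof.
have := arc_weight_lt e1; have := arc_weight_lt e2; rewrite /block_rank.
rewrite /Ti_arc /= => w2 w1 /orP[|/orP[/and3P[/eqP-> h1 h2]|/arc_succ_weight]].
- case/attached_arc_witness=> e [u [v [eu ev uv]]].
  case: u eu uv => [[c w]|[]] // [? ? ?]; case: v ev => [[c' w']|[]] // [? ? ?]; subst.
  by case/andP=> /eqP -> _; left.
- by right; move: h1 h2; case: c1; case: c2 => //= _ _; lia.
- by right; case: c1; case: c2 => /=; lia.
Qed.

(* [t] is an end of [e] or lies in the half [c] of the block V_e. *)
Definition in_block (e : GedgeT G) (c : bool) (t : TV G m) :=
  exists2 u, t = embed e u & forall c' w, u = inl (c', w) -> c' = c.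

Lemma in_block_decode e c t : in_block e c t ->
  t = embed e (decode e t) /\ forall c' w, decode e t = inl (c', w) -> c' = c.
Proof. by case=> u -> uc; rewrite embedK. Qed.

Lemma in_block_between e c v1 v2 t :
  T t (inr (e, c, v1)) -> T (inr (e, c, v2)) t -> in_block e c t.
Proof.
case: t => [a _ /Ti_arc_to_inl[r ->]|[[e' c'] w] h1 h2]; first by exists (inr r).
have [[-> ->]|r1] := Ti_arc_rank h1; first by exists (inl (c, w)) => // ? ? [].
have [[-> ->]|r2] := Ti_arc_rank h2; first by exists (inl (c', w)) => // ? ? [].
lia.
Qed.

End TiBlocks.

End AttachedCopies.

(* Inside one attached copy, the degree bound (I) keeps [ux] and [uy] off the non-root
   vertices, and comparing the k vertices below the threshold with the K vertices below
   the copy's own threshold gives k = K. *)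
Section BlockRigidity.

Variables (m : nat) (F0 : rel 'I_m) (K k : nat) (g : 'I_m -> FdagV m).
Variables (ux uy : FdagV m) (c : bool).
Local Notation E := (Fdag_tour_arc F0 K).

Hypotheses (m_gt0 : 0 < m) (hI : condI F0).
Hypothesis k_range : 2 * m + 6 < 3 * k /\ 6 * k < 5 * m.
Hypothesis K_range : 2 * m + 6 < 3 * K /\ 6 * K < 5 * m.
Hypothesis g_inj : injective g.
Hypothesis g_half : forall v c' w, g v = inl (c', w) -> c' = c.
Hypothesis ux_half : forall c' w, ux = inl (c', w) -> c' = c.
Hypothesis uy_half : forall c' w, uy = inl (c', w) -> c' = c.
Hypothesis g_low : forall v : 'I_m, v < k -> E ux (g v) /\ E (g v) uy.
Hypothesis g_high : forall v : 'I_m, k <= v -> E uy (g v) /\ E (g v) ux.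

Lemma low_image_card (N : {set 'I_m}) :
  (forall v : 'I_m, v < k -> forall w, g v = inl (c, w) -> w \in N) -> k <= #|N| + 2.
Proof.
move=> gN; pose S := [set inl (c, w) | w in N] :|: [set inr false; inr true].
have S_card : #|S| <= #|N| + 2.
  rewrite cardsU card_imset ?cards2; last by move=> ? ? [].
  exact: leq_trans (leq_subr _ _) _.
suff : #|[set v : 'I_m | v < k]| <= #|S| by rewrite card_ord_lt; lia.
apply: (@leq_card_in_maps _ _ _ _ g) => [u v _ _ /g_inj //|v]; rewrite inE => vk.
case eg: (g v) => [[c' w]|[]]; rewrite !inE ?eqxx ?orbT //.
have ec := g_half eg; subst c'.
by apply/orP; left; apply/imsetP; exists w => //; exact: gN eg.
Qed.

Lemma ends_are_roots : exists r, ux = inr r /\ uy = inr (~~ r).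
Proof.
have ux_root c' x0 : ux <> inl (c', x0).
  move=> ex; have ec := ux_half ex; subst c' ux.
  have := @low_image_card [set w | F0 x0 w].
  have [+ _] := hI x0; move: #|[set w | F0 x0 w]| => d ? lb.
  suff : k <= d + 2 by lia.
  apply: lb => v /g_low[+ _] w gv; rewrite gv Fdag_tour_arc_ll eqxx inE.
  by case: (c) => //=; rewrite orbF.
have uy_root c' y0 : uy <> inl (c', y0).
  move=> ey; have ec := uy_half ey; subst c' uy.
  have := @low_image_card [set w | F0 w y0].
  have [_ +] := hI y0; move: #|[set w | F0 w y0]| => d ? lb.
  suff : k <= d + 2 by lia.
  apply: lb => v /g_low[_ +] w gv; rewrite gv Fdag_tour_arc_ll eqxx inE.
  by case: (c) => //=; rewrite orbF.
have [rx ex] : exists rx, ux = inr rx.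
  by case: ux ux_root => [[c' x0] /(_ c' x0)|rx _] //; exists rx.
have [ry ey] : exists ry, uy = inr ry.
  by case: uy uy_root => [[c' y0] /(_ c' y0)|ry _] //; exists ry.
exists rx; rewrite ex ey; split => //; congr inr.
have [] := @g_low (Ordinal m_gt0) ltac:(rewrite /=; lia); rewrite ex ey; clear ex ey.
case: (g _) => [[c' w]|r]; rewrite ?Fdag_tour_arc_rl ?Fdag_tour_arc_lr ?Fdag_tour_arc_rr.
  by case: rx ry c' => [] [] [] //=; lia.
by case: rx ry r => [] [] [].
Qed.

Lemma block_images_nonroot v : exists w, g v = inl (c, w).
Proof.
have [rx [ex ey]] := ends_are_roots.
case eg: (g v) => [[c' w]|r]; first by exists w; rewrite (g_half eg).
have [/g_low|/g_high] := ltnP v k; rewrite ex ey eg !Fdag_tour_arc_rr;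
  by case: (rx); case: (r); case.
Qed.

Lemma block_threshold : ux = inr c /\ k = K.
Proof.
have [rx [ex ey]] := ends_are_roots.
pose h v := if g v is inl (_, w) then w else v.
have gh v : g v = inl (c, h v) by rewrite /h; have [w ->] := block_images_nonroot v.
have h_inj : {in [set: 'I_m] &, injective h} by move=> u v _ _ huv; apply: g_inj; rewrite !gh huv.
have h_low (v : 'I_m) : v < k -> if rx == c then h v < K else K <= h v.
  by case/g_low; rewrite ex gh Fdag_tour_arc_rl.
have h_high (v : 'I_m) : k <= v -> if rx == c then K <= h v else h v < K.
  by case/g_high; rewrite ey gh Fdag_tour_arc_rl; case: (rx); case: (c).
have maps (A B : {set 'I_m}) : {in A, forall v, h v \in B} -> #|A| <= #|B|.
  by apply: (@leq_card_in_maps _ _ _ _ h) => u v _ _; exact: h_inj.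
move: h_low h_high; case: eqP => [erc|_] h_low h_high.
  have le_low : #|[set v : 'I_m | v < k]| <= #|[set w : 'I_m | w < K]|.
    by apply: maps => v; rewrite !inE => /h_low.
  have le_high : #|[set v : 'I_m | k <= v]| <= #|[set w : 'I_m | K <= w]|.
    by apply: maps => v; rewrite !inE => /h_high.
  split; first by rewrite ex erc.
  by move: le_low le_high; rewrite ?card_ord_lt ?card_ord_ge; lia.
have : #|[set v : 'I_m | v < k]| <= #|[set w : 'I_m | K <= w]|.
  by apply: maps => v; rewrite !inE => /h_low.
by rewrite ?card_ord_lt ?card_ord_ge; lia.
Qed.

Lemma block_rigidity :
  [/\ ux = inr c, uy = inr (~~ c), k = K & forall v, exists w, g v = inl (c, w)].
Proof.
have [rx [erx ey]] := ends_are_roots; have [ex ekK] := block_threshold.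
have erc : rx = c by move: erx; rewrite ex => -[].
by split => //; [rewrite ey erc | exact: block_images_nonroot].
Qed.

End BlockRigidity.

Definition in_base (n : nat) (G : rel 'I_n) (m : nat) (t : TV G m) : bool :=
  if t is inl _ then true else false.

Section HalfImage.

Variables (n : nat) (G : rel 'I_n) (m : nat) (F0 : rel 'I_m) (K k : nat).
Variables (psi : 'I_m -> TV G m) (X Y : TV G m).
Local Notation T := (@Ti_arc n G m F0 K).

Hypotheses (m_large : 80 * 80 <= m) (F0good : F0_good F0).
Hypothesis k_range : 2 * m + 6 < 3 * k /\ 6 * k < 5 * m.
Hypothesis psi_hom : forall u v, F0 u v -> T (psi u) (psi v).
Hypothesis psi_low : forall v : 'I_m, v < k -> T X (psi v) /\ T (psi v) Y.
Hypothesis psi_high : forall v : 'I_m, k <= v -> T Y (psi v) /\ T (psi v) X.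

(* T_0 is transitive, so F_0 restricted to the preimage of [n] is acyclic and (III) fails. *)
Lemma base_preimage_small :
  ~~ ((2 * m - 13 * #|[set v | in_base (psi v)]|) ^ 2 <= 169 * m).
Proof.
case: F0good => _ _ _ _ hIII; apply/negP => /hIII[c [c_gt0 _ cP cyc]].
pose f v := if psi v is inl a then nat_of_ord a else 0.
have : ~~ cycle F0 c.
  apply: (@cycle_potential_increasing _ _ f (mem [set v | in_base (psi v)])) => //.
    move=> u v; rewrite !inE /f => + + /psi_hom.
    by case: (psi u) => // a; case: (psi v) => // b _ _ /Ti_arc_inl.
  by apply/allP => v /cP.
by rewrite cyc.
Qed.

Lemma large_block : exists e c (B : {set 'I_m}),
  6 * #|~: B| < m /\ {in B, forall v, exists w, psi v = inr (e, c, w)}.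
Proof.
case: F0good => m_gt0 tourF0 _ hII _.
have [s0_gt0 _] := ceil_sqrt_bounds m_gt0.
have P_small := condIII_failure_small m_large base_preimage_small.
set P := [set v | in_base (psi v)] in P_small; set R := ~: P.
have rank_mono : {in R &, forall u v, F0 u v ->
    vertex_rank (psi u) <= vertex_rank (psi v)}.
  move=> u v; rewrite !inE => + + /psi_hom.
  case: (psi u) => // -[[e1 c1] w1]; case: (psi v) => // -[[e2 c2] w2] _ _.
  by case/Ti_arc_rank => [[-> ->] //|/ltnW].
have [t [low high]] := condII_level tourF0 hII s0_gt0 rank_mono.
set Lo := [set v in R | _ < t] in low; set Hi := [set v in R | t < _] in high.
pose B := [set v in R | vertex_rank (psi v) == t].
have B_large : 6 * #|~: B| < m.
  have : ~: B \subset (P :|: Lo) :|: Hi.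
    by apply/subsetP => v; rewrite !inE; case: in_base; case: ltngtP.
  move/subset_leq_card; rewrite !cardsU; move: P_small low high.
  by move: #|P| #|Lo| #|Hi| => a l h; lia.
have [v0 v0B] : exists v0, v0 \in B.
  by apply/set0Pn; apply: contraTneq B_large => ->; rewrite setC0 cardsT card_ord; lia.
move: (v0B); rewrite !inE; case ev0: (psi v0) => [//|[[e c] w0]] /= /eqP rank_v0.
exists e, c, B; split => // v; rewrite !inE.
case: (psi v) => // -[[e' c'] w] /= /eqP rank_v.
by case: (block_rank_inj (etrans rank_v (esym rank_v0))) => -> ->; exists w.
Qed.

Lemma half_in_block : exists e c,
  [/\ forall v, in_block e c (psi v), in_block e c X & in_block e c Y].
Proof.
case: F0good => _ tourF0 hI _ _.
have [e [c [B [B_large inB]]]] := large_block.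
have meetB (A : {set 'I_m}) :
    #|~: B| < #|A| -> exists v, [/\ v \in A & exists w, psi v = inr (e, c, w)].
  by case/meet_of_card_setC_lt => v vA /inB; exists v.
have [vs [+ [ws evs]]] := meetB [set v : 'I_m | v < k] ltac:(rewrite card_ord_lt; lia).
have [vl [+ [wl evl]]] := meetB [set v : 'I_m | k <= v] ltac:(rewrite card_ord_ge; lia).
rewrite !inE => /psi_high[Y_vl vl_X] /psi_low[X_vs vs_Y].
rewrite evs in X_vs vs_Y; rewrite evl in Y_vl vl_X.
exists e, c; split; [move=> u | exact: in_block_between X_vs vl_X |
                             exact: in_block_between Y_vl vs_Y].
have [[v1 /psi_hom hout /inB[w1 ev1]] [v2 /psi_hom hin /inB[w2 ev2]]] :=
  tournament_neighbours_in tourF0 hI u ltac:(lia) B_large.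
by rewrite ev1 in hout; rewrite ev2 in hin; exact: in_block_between hout hin.
Qed.

Hypothesis K_range : 2 * m + 6 < 3 * K /\ 6 * K < 5 * m.

Lemma half_block_rigid : exists e rx, [/\ X = embed e (inr rx), Y = embed e (inr (~~ rx)),
  k = K & forall v, exists w, psi v = inr (e, rx, w)].
Proof.
case: (F0good) => m_gt0 tourF0 hI _ _.
have [e [c [psi_in X_in Y_in]]] := half_in_block.
have psi_inj : injective psi.
  move=> u v euv; apply/eqP; apply: contraT => /(tournament_total tourF0).
  by case/orP=> /psi_hom; rewrite euv (negbTE (Ti_arc_irr _ (tournament_irr tourF0) _)).
pose g v := decode e (psi v).
have psi_g v : psi v = embed e (g v) by have [] := in_block_decode (psi_in v).
have [eX X_half] := in_block_decode X_in; have [eY Y_half] := in_block_decode Y_in.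
have g_inj : injective g by move=> u v guv; apply: psi_inj; rewrite !psi_g guv.
have arcE a b : @Ti_arc n G m F0 K (embed e a) (embed e b) = Fdag_tour_arc F0 K a b.
  exact: Ti_arc_embed.
have g_low (v : 'I_m) : v < k ->
    Fdag_tour_arc F0 K (decode e X) (g v) /\ Fdag_tour_arc F0 K (g v) (decode e Y).
  by move/psi_low; rewrite -!arcE -eX -eY -psi_g.
have g_high (v : 'I_m) : k <= v ->
    Fdag_tour_arc F0 K (decode e Y) (g v) /\ Fdag_tour_arc F0 K (g v) (decode e X).
  by move/psi_high; rewrite -!arcE -eX -eY -psi_g.
have g_half v := (in_block_decode (psi_in v)).2.
have [dX dY ekK g_nonroot] :=
  block_rigidity m_gt0 hI k_range K_range g_inj g_half X_half Y_half g_low g_high.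
exists e, c; split => //; [by rewrite eX dX | by rewrite eY dY | move=> v].
by have [w gv] := g_nonroot v; exists w; rewrite psi_g gv.
Qed.

End HalfImage.

Definition copy_le (s : nat) (r : 'I_s -> nat) (a b : CopyT r) := (a == b) || copy_lt a b.

Lemma copy_le_trans (s : nat) (r : 'I_s -> nat) : transitive (@copy_le s r).
Proof.
move=> b a c; rewrite /copy_le => /orP[/eqP->//|ab] /orP[/eqP<-|bc]; first by rewrite ab orbT.
apply/orP; right; move: ab bc; rewrite /copy_lt.
move=> /orP[ab|/andP[/eqP/(congr1 (@nat_of_ord s)) eab ab]]
       /orP[bc|/andP[/eqP/(congr1 (@nat_of_ord s)) ebc bc]]; apply/orP; [left; lia.. | right].
by apply/andP; split; [apply/eqP/ord_inj|]; lia.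
Qed.

Lemma copy_le_anti (s : nat) (r : 'I_s -> nat) (a b : CopyT r) :
  copy_le a b -> copy_le b a -> a = b.
Proof.
rewrite /copy_le => /orP[/eqP->//|ab] /orP[/eqP->//|ba]; exfalso; move: ab ba; rewrite /copy_lt.
by move=> /orP[ab|/andP[/eqP/(congr1 (@nat_of_ord s)) eab ab]]
          /orP[ba|/andP[/eqP/(congr1 (@nat_of_ord s)) eba ba]]; lia.
Qed.

Section TstarArcs.

Variables (s : nat) (r : 'I_s -> nat) (n : nat) (G : rel 'I_n) (m : nat).
Variables (F0 : rel 'I_m) (k : 'I_s -> nat).
Local Notation Tstar := (@Tstar_arc s r n G m F0 k).

Lemma Tstar_arc_copy_le x y : Tstar x y -> copy_le x.1 y.1.
Proof. by rewrite /Tstar_arc /copy_le; case: eqP. Qed.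

Lemma Tstar_arc_same_copy (C : CopyT r) (a b : TV G m) :
  Tstar (C, a) (C, b) = Ti_arc F0 (k (tag C)) a b.
Proof. by rewrite /Tstar_arc /= eqxx. Qed.

End TstarArcs.

Lemma k_good_inj (m s : nat) (k : 'I_s -> nat) : k_good m k -> injective k.
Proof.
case=> _ k_dec; pose f j := oapp k 0 (insub j).
have fk (i : 'I_s) : f i = k i by rewrite /f valK.
have f_dec : {in gtn s &, {homo f : a b / a < b >-> b < a}}.
  apply: homo_ltn_in => [y x z yx zy|a b _ b_s c /andP[_ cb]|a a_s a1_s].
  - exact: ltn_trans zy yx.
  - exact: ltn_trans cb b_s.
  - by have := k_dec (Ordinal a_s) (Ordinal a1_s) erefl; rewrite -!fk /=; lia.
move=> i j eij; apply: val_inj; case: (ltngtP i j) => // ij.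
  by have := f_dec _ _ (ltn_ord i) (ltn_ord j) ij; rewrite !fk eij ltnn.
by have := f_dec _ _ (ltn_ord j) (ltn_ord i) ij; rewrite !fk eij ltnn.
Qed.

Section HomRigidity.

Variables (s : nat) (r : 'I_s -> nat) (n : nat) (G : rel 'I_n) (m : nat).
Variables (F0 : rel 'I_m) (k : 'I_s -> nat) (i : 'I_s) (phi : FdagV m -> TstarV r G m).
Local Notation Tstar := (@Tstar_arc s r n G m F0 k).

Hypotheses (m_large : 80 * 80 <= m) (F0good : F0_good F0) (kgood : k_good m k).
Hypothesis phi_hom : forall u v, Fdag_arc F0 (k i) u v -> Tstar (phi u) (phi v).

Local Notation C := (phi (root_z m)).1.

Lemma hom_root_paths c (v : 'I_m) :
  if v < k i
  then Tstar (phi (inr c)) (phi (inl (c, v))) /\ Tstar (phi (inl (c, v))) (phi (inr (~~ c)))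
  else Tstar (phi (inr (~~ c))) (phi (inl (c, v))) /\ Tstar (phi (inl (c, v))) (phi (inr c)).
Proof.
have [f1 f2 f3 f4] := Fdag_arc_root_nonroot F0 (k i) c v.
by case: ifP => vk; split; apply: phi_hom; rewrite ?f1 ?f2 ?f3 ?f4 ?vk // leqNgt vk.
Qed.

(* The copies are linearly ordered and hom_root_paths squeezes every vertex between the
   images of the two roots, first for the vertices 0 and m - 1 to identify the roots' copies. *)
Lemma hom_one_copy u : (phi u).1 = C.
Proof.
case: F0good => m_gt0 _ _ _ _; have [/(_ i) [k1 k2] _] := kgood.
have m1_lt : m.-1 < m by lia.
have W_C : (phi (inr true)).1 = C.
  have := hom_root_paths false (Ordinal m_gt0); have := hom_root_paths false (Ordinal m1_lt).
  rewrite /= ifF ?ifT; try lia.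
  move=> [/Tstar_arc_copy_le b1 /Tstar_arc_copy_le b2].
  move=> [/Tstar_arc_copy_le a1 /Tstar_arc_copy_le a2].
  by apply: copy_le_anti; [exact: copy_le_trans b1 b2 | exact: copy_le_trans a1 a2].
have root_C c : (phi (inr c)).1 = C by case: c.
case: u => [[c v]|c]; last exact: root_C.
have := hom_root_paths c v; case: ifP => _ [/Tstar_arc_copy_le + /Tstar_arc_copy_le +];
  rewrite !root_C => h1 h2; exact: copy_le_anti.
Qed.

Lemma hom_Ti_arc u v :
  Tstar (phi u) (phi v) -> Ti_arc F0 (k (tag C)) (phi u).2 (phi v).2.
Proof.
move: (hom_one_copy u) (hom_one_copy v).
by case: (phi u) => Cu a; case: (phi v) => Cv b /= -> ->; rewrite Tstar_arc_same_copy.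
Qed.

Lemma hom_half_block c : exists e rx,
  [/\ (phi (inr c)).2 = embed e (inr rx), (phi (inr (~~ c))).2 = embed e (inr (~~ rx)),
      k i = k (tag C) & forall v, exists w, (phi (inl (c, v))).2 = inr (e, rx, w)].
Proof.
have [/(_ i) k_range _] := kgood; have [/(_ (tag C)) K_range _] := kgood.
have psi_hom u v : F0 u v -> Ti_arc F0 (k (tag C)) (phi (inl (c, u))).2 (phi (inl (c, v))).2.
  by move=> uv; apply/hom_Ti_arc/phi_hom; rewrite /= eqxx.
have psi_low (v : 'I_m) : v < k i ->
    Ti_arc F0 (k (tag C)) (phi (inr c)).2 (phi (inl (c, v))).2 /\
    Ti_arc F0 (k (tag C)) (phi (inl (c, v))).2 (phi (inr (~~ c))).2.
  by move=> vk; have := hom_root_paths c v; rewrite vk => -[/hom_Ti_arc ? /hom_Ti_arc ?].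
have psi_high (v : 'I_m) : k i <= v ->
    Ti_arc F0 (k (tag C)) (phi (inr (~~ c))).2 (phi (inl (c, v))).2 /\
    Ti_arc F0 (k (tag C)) (phi (inl (c, v))).2 (phi (inr c)).2.
  by move=> vk; have := hom_root_paths c v; rewrite ltnNge vk => -[/hom_Ti_arc ? /hom_Ti_arc ?].
exact: half_block_rigid m_large F0good k_range psi_hom psi_low psi_high K_range.
Qed.

Lemma hom_rigid : tag C = i /\ exists e rx,
  [/\ (phi (root_z m)).2 = embed e (inr rx), (phi (root_w m)).2 = embed e (inr (~~ rx)) &
      forall u, phi u = (C, embed e (decode e (phi u).2))].
Proof.
have [e [rx [x1 y1 ekk v1]]] := hom_half_block false.
have [e' [rx' [y2 x2 _ v2]]] := hom_half_block true.
move: y1 x2 => /= y1 x2.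
have [ee' erx] : e = e' /\ rx = ~~ rx'.
  apply: embed_roots_inj; first exact: etrans (esym x1) x2.
  by rewrite negbK; exact: etrans (esym y1) y2.
subst e' rx; split; first exact/esym/(k_good_inj kgood).
exists e, (~~ rx'); split => // u.
suff [t et] : exists t, (phi u).2 = embed e t.
  by rewrite et embedK -et -(hom_one_copy u); case: (phi u).
case: u => [[[] v]|[]].
- by have [w ->] := v2 v; exists (inl (rx', w)).
- by have [w ->] := v1 v; exists (inl (~~ rx', w)).
- by exists (inr rx'); rewrite y1 negbK.
- by exists (inr (~~ rx')).
Qed.

End HomRigidity.

Lemma rel_homP (A B : finType) (EA : rel A) (EB : rel B) (f : A -> B) :
  reflect (forall u v, EA u v -> EB (f u) (f v))
          [forall u, forall v, EA u v ==> EB (f u) (f v)].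
Proof.
apply: (iffP forallP) => [h u v|h u]; first exact/implyP/(forallP (h u)).
by apply/forallP => v; apply/implyP/h.
Qed.

(* Exchanging the two copies of F_i^† is an automorphism swapping the roots. *)
Definition Fdag_swap (m : nat) (u : FdagV m) : FdagV m :=
  match u with inl (c, v) => inl (~~ c, v) | inr r => inr (~~ r) end.

Lemma Fdag_swapK (m : nat) : involutive (@Fdag_swap m).
Proof. by case=> [[c v]|r] /=; rewrite negbK. Qed.

Lemma Fdag_arc_swap (m : nat) (F0 : rel 'I_m) (K : nat) u v :
  Fdag_arc F0 K (Fdag_swap u) (Fdag_swap v) = Fdag_arc F0 K u v.
Proof. by case: u => [[[] w]|[]]; case: v => [[[] w']|[]]. Qed.

Lemma hom_xy_swap_le (m : nat) (F0 : rel 'I_m) (K : nat) (T : finType) (ET : rel T) (x y : T) :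
  hom_xy (Fdag_arc F0 K) ET (root_z m) (root_w m) x y <=
  hom_xy (Fdag_arc F0 K) ET (root_z m) (root_w m) y x.
Proof.
pose sw (phi : {ffun FdagV m -> T}) := [ffun u => phi (Fdag_swap u)].
apply: (@leq_card_in_maps _ _ _ _ sw) => [p1 p2 _ _ e12|phi].
  apply/ffunP => u; have := congr1 (fun f : {ffun _ -> _} => f (Fdag_swap u)) e12.
  by rewrite !ffunE Fdag_swapK.
rewrite !inE !ffunE => /and3P[-> -> /rel_homP hom]; apply/rel_homP => u v uv.
by rewrite !ffunE; apply: hom; rewrite Fdag_arc_swap.
Qed.

Lemma hom_xy_swap (m : nat) (F0 : rel 'I_m) (K : nat) (T : finType) (ET : rel T) (x y : T) :
  hom_xy (Fdag_arc F0 K) ET (root_z m) (root_w m) x y =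
  hom_xy (Fdag_arc F0 K) ET (root_z m) (root_w m) y x.
Proof. by apply/eqP; rewrite eqn_leq !hom_xy_swap_le. Qed.

Section Counting.

Variables (s : nat) (r : 'I_s -> nat) (n : nat) (G : rel 'I_n) (m : nat).
Variables (F0 : rel 'I_m) (k : 'I_s -> nat) (i : 'I_s).
Hypotheses (m_large : 80 * 80 <= m) (F0good : F0_good F0) (kgood : k_good m k).

Local Notation hom := (hom_xy (Fdag_arc F0 (k i)) (@Tstar_arc s r n G m F0 k)
  (root_z m) (root_w m)).
Local Notation self_homs := (hom_xy (Fdag_arc F0 (k i)) (Fdag_tour_arc F0 (k i))
  (root_z m) (root_w m) (root_z m) (root_w m)).

Lemma self_homs_gt0 : 0 < self_homs.
Proof.
apply/card_gt0P; exists [ffun u => u]; rewrite inE !ffunE !eqxx /=.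
by apply/rel_homP => u v uv; rewrite !ffunE /Fdag_tour_arc uv.
Qed.

(* On an arc of T_{i*k}[G] the homomorphisms are exactly the self-maps of the attached
   copy of F_i^†, transported into T_G^★. *)
Lemma hom_in_TikG x y : in_TikG i x y -> hom x y = self_homs.
Proof.
case: x y => C [a|?] [C' [b|?]]; rewrite /in_TikG /= ?andbF //.
move=> /andP[/andP[/eqP <- /eqP tagC] ab].
pose e : GedgeT G := exist _ (a, b) ab.
pose lift (g : {ffun FdagV m -> FdagV m}) : {ffun FdagV m -> TstarV r G m} :=
  [ffun u => (C, embed e (g u))].
have lift_inj : injective lift.
  move=> g1 g2 /ffunP e12; apply/ffunP => u.
  by have := e12 u; rewrite !ffunE => -[/embed_inj].
have arcE u v : Tstar_arc F0 k (C, embed e u) (C, embed e v) = Fdag_tour_arc F0 (k i) u v.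
  by rewrite Tstar_arc_same_copy tagC Ti_arc_embed.
rewrite /hom_xy -(card_imset _ lift_inj); apply: eq_card => phi; rewrite [in LHS]inE.
apply/idP/imsetP => [/and3P[/eqP hz /eqP hw /rel_homP phi_hom]|[g]].
  have [_ [e' [rx [ez ew phiE]]]] := hom_rigid m_large F0good kgood phi_hom.
  have [ee' erx] : e = e' /\ false = rx.
    apply: embed_roots_inj; [exact: etrans (esym (congr1 snd hz)) ez |
                             exact: etrans (esym (congr1 snd hw)) ew].
  subst e' rx; rewrite hz /= in phiE.
  exists [ffun u => decode e (phi u).2]; last first.
    by apply/ffunP => u; rewrite /lift !ffunE; exact: phiE.
  have b_neq_a : b != a by rewrite neq_ltn (edge_lt e) orbT.
  rewrite inE !ffunE hz hw /= eqxx b_neq_a /=.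
  by apply/rel_homP => u v /phi_hom; rewrite phiE [phi v]phiE arcE !ffunE.
rewrite inE => /and3P[/eqP gz /eqP gw /rel_homP g_hom] ->.
rewrite /lift !ffunE gz gw !eqxx /=; apply/rel_homP => u v uv.
by rewrite !ffunE arcE; exact: g_hom.
Qed.

Lemma hom_not_TikG x y : ~~ in_TikG i x y -> ~~ in_TikG i y x -> hom x y = 0.
Proof.
move=> nxy nyx; apply/eqP; rewrite cards_eq0; apply/eqP/setP => phi; rewrite !inE.
apply/negP => /and3P[/eqP hz /eqP hw /rel_homP phi_hom].
have [tagC [e [rx [ez ew _]]]] := hom_rigid m_large F0good kgood phi_hom.
have wz := hom_one_copy m_large F0good kgood phi_hom (root_w m).
move: nxy nyx; rewrite -hz -hw /in_TikG wz tagC eqxx /= ez ew; clear.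
by case: rx; case: e => -[a b] /= ab; rewrite eqxx ab ?orbT.
Qed.

End Counting.

Unset Implicit Arguments. Set Strict Implicit. Set Printing Implicit Defensive.

Theorem lemma4p8 (s : nat) (hs : (0 < s)%N) :
  exists M : nat, forall m : nat, (M <= m)%N ->
  forall F0 : rel 'I_m, F0_good F0 ->
  forall k : 'I_s -> nat, k_good m k ->
  forall (n : nat) (G : rel 'I_n), simple_graph G ->
  forall r : 'I_s -> nat, (forall i, (0 < r i)%N) ->
  forall i : 'I_s, exists a : rat, (0 < a)%R /\
    forall x y : TstarV r G m,
      t_xy (Fdag_arc F0 (k i)) (Tstar_arc F0 k) (root_z m) (root_w m) x y
      = (if in_TikG i x y || in_TikG i y x then a else 0%R).
Proof.
exists (80 * 80) => m m_large F0 F0good k kgood n G _ r _ i.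
have [/card0_eq V_empty|V_gt0] := posnP #|TstarV r G m|.
  by exists 1%R; split => // x; have := V_empty x; rewrite inE.
pose N := hom_xy (Fdag_arc F0 (k i)) (Fdag_tour_arc F0 (k i))
  (root_z m) (root_w m) (root_z m) (root_w m).
exists (N%:R / (#|TstarV r G m| ^ (#|FdagV m| - 2))%:R)%R; split.
  by rewrite Num.Theory.divr_gt0 // Num.Theory.ltr0n ?expn_gt0 ?V_gt0 // self_homs_gt0.
move=> x y; rewrite /t_xy; case: ifP => [/orP[]|/negbT].
- by move/(hom_in_TikG m_large F0good kgood) ->.
- by rewrite hom_xy_swap => /(hom_in_TikG m_large F0good kgood) ->.
- rewrite negb_or => /andP[nxy nyx].
  by rewrite (hom_not_TikG m_large F0good kgood nxy nyx) GRing.mul0r.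
Qed.
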